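(* For $n\ge2$ let $\beta_n$ and $\gamma_n$ be the minimal zeros of $U^{\mathrm{e}}_n(x)$ and $S_n(x)$ respectively. Then $\beta_2=\gamma_2=-\frac12$; $$-1<\gamma_{2n+1}<\cos\frac{(2n+1)\pi}{2n+2}<\beta_{2n+1}=\cos\frac{2n\pi}{2n+2}\quad(n\ge1);$$ $$-1<\beta_{2n}=\cos\frac{2n\pi}{2n+1}<\gamma_{2n}<\cos\frac{(2n-1)\pi}{2n+1}\quad(n\ge2).$$
   Context: $U_n(x)$ is the Chebyshev polynomial of the second kind ($U_n(\cos\theta)=\sin((n+1)\theta)/\sin\theta$), with $U_{-1}=0$. The partial Chebyshev polynomial $U^{\mathrm{e}}_n$ is the polynomial with $U^{\mathrm{e}}_n(\cos\theta)=\frac{\sin((n+1)\theta/2)}{\sin(\theta/2)}$ for even $n$ and $U^{\mathrm{e}}_n(\cos\theta)=\frac{\sin((n+1)\theta/2)}{\sin\theta}$ for odd $n$. For $n\ge0$, $S_{2n}(x)=(2nx+x+2n-1)U_n(x)-(2nx+3x+2n+1)U_{n-1}(x)$ and $S_{2n+1}(x)=2(2nx^2+2x^2+2nx-x-1)U_n(x)-2(2nx+3x+2n+1)U_{n-1}(x)$. *)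

From HB Require Import structures.
From mathcomp Require Import all_boot all_order all_algebra.
From mathcomp Require Import all_classical all_reals all_analysis.
Set Implicit Arguments. Unset Strict Implicit. Unset Printing Implicit Defensive.
Import Order.TTheory GRing.Theory Num.Theory.
Local Open Scope ring_scope.

(* Ushift R k = U_{k-1} (Chebyshev of the second kind), so Ushift 0 = U_{-1} = 0. *)
Fixpoint Ushift (R : realType) (k : nat) {struct k} : {poly R} :=
  match k with
  | 0 => 0
  | 1 => 1
  | (j.+1 as k1).+1 => 2%:P * 'X * Ushift R k1 - Ushift R j
  end.

Definition Ucheb (R : realType) (n : nat) : {poly R} := Ushift R n.+1.

Definition Spoly (R : realType) (m : nat) : {poly R} :=
  let n := m./2 in
  let nR : R := n%:R in
  if ~~ odd m then
    (((2 * nR + 1) *: 'X + ((2 * nR - 1)%:P)) * Ucheb R n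
     - ((2 * nR + 3) *: 'X + ((2 * nR + 1)%:P)) * Ushift R n)
  else
    (2%:P * ((2 * nR + 2) *: 'X ^+ 2 + (2 * nR - 1) *: 'X - 1) * Ucheb R n
     - 2%:P * ((2 * nR + 3) *: 'X + ((2 * nR + 1)%:P)) * Ushift R n).

(* P is the partial Chebyshev polynomial U^e_n, characterised as in the paper
   by its values at cos θ (wherever the denominator is nonzero). *)
Definition is_Ue (R : realType) (n : nat) (P : {poly R}) : Prop :=
  if ~~ odd n then
    forall t : R, sin (t / 2) != 0 ->
      P.[cos t] = sin ((n%:R + 1) * t / 2) / sin (t / 2)
  else
    forall t : R, sin t != 0 ->
      P.[cos t] = sin ((n%:R + 1) * t / 2) / sin t.

Definition is_min_zero (R : realType) (p : {poly R}) (b : R) : Prop :=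
  root p b /\ forall x : R, root p x -> b <= x.

From HB Require Import structures.
From mathcomp Require Import all_boot all_order all_algebra.
From mathcomp Require Import all_classical all_reals all_analysis.
From mathcomp Require Import polyrcf ring lra zify.
Import Order.TTheory GRing.Theory Num.Theory.
Local Open Scope ring_scope.

Set Implicit Arguments.
Unset Strict Implicit.
Unset Printing Implicit Defensive.

(* Everything rests on U_{k-1}(cos t) sin t = sin (k t).  It forces
   U^e_{2n+1} = U_n and U^e_{2n} = U_n + U_{n-1}, whose zeros are the explicit
   nodes cos (k pi / (n+1)) and cos (2 k pi / (2n+1)), so beta_m is the last
   node.  It also writes S_m(cos t) sin t through the sine and cosine of
   (n+1) t (m = 2n+1), resp. (2n+1) t / 2 (m = 2n); at the nodes
   cos ((2k+1) pi / (m+1)) one of them vanishes and S_m alternates in sign.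
   One more sign change below the last node (at -1 for m odd, at beta_m for
   m even, where cos d >= 1 - d^2/2 decides the sign) and the zero S_m(1) = 0
   account for all deg S_m zeros, so gamma_m lies in that last interval. *)

Section Chebyshev.
Variable R : realType.
Implicit Types (k : nat) (t : R).

Lemma size_Ushift k : (size (Ushift R k) <= k)%N.
Proof.
elim/ltn_ind: k => -[|[|j]] IH /=; first by rewrite size_poly0.
  by rewrite size_poly1.
have size2X : (size (2%:P * 'X : {poly R})%R <= 2)%N.
  by rewrite (leq_trans (size_polyMleq _ _)) // size_polyX size_polyC; case: (_ != 0).
have sizeM : (size (2%:P * 'X * Ushift R j.+1)%R <= j.+2)%N.
  rewrite (leq_trans (size_polyMleq _ _)) //.
  by have := IH j.+1 (ltnSn _); move: size2X; lia.
rewrite (leq_trans (size_polyD _ _)) // geq_max size_polyN sizeM /=.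
by rewrite (leq_trans (IH j _)) // leqW.
Qed.

Lemma hornerUshift_cos k t : (Ushift R k).[cos t] * sin t = sin (k%:R * t).
Proof.
elim/ltn_ind: k => -[|[|j]] IH /=; first by rewrite horner0 !mul0r sin0.
  by rewrite hornerC !mul1r.
rewrite hornerD hornerN !hornerM hornerC hornerX.
transitivity (2 * cos t * ((Ushift R j.+1).[cos t] * sin t)
              - (Ushift R j).[cos t] * sin t); first by ring.
rewrite IH // IH; last exact: leqW.
have -> : j.+2%:R * t = j.+1%:R * t + t by rewrite [in LHS]mulrSr mulrDl mul1r.
have -> : j%:R * t = j.+1%:R * t - t by rewrite mulrSr mulrDl mul1r addrK.
rewrite sinB sinD; ring.
Qed.

Lemma hornerUshift1 k : (Ushift R k).[1] = k%:R.
Proof.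
elim/ltn_ind: k => -[|[|j]] IH /=; first by rewrite horner0.
  by rewrite hornerC.
rewrite hornerD hornerN !hornerM hornerC hornerX (IH j.+1) // (IH j); last exact: leqW.
rewrite -!natr1; ring.
Qed.

Lemma hornerUshiftN1 k : (Ushift R k).[-1] = (-1) ^+ k.+1 * k%:R.
Proof.
elim/ltn_ind: k => -[|[|j]] IH /=; first by rewrite horner0 mulr0.
  by rewrite hornerC expr2 mulrNN !mul1r.
rewrite hornerD hornerN !hornerM hornerC hornerX (IH j.+1) // (IH j); last exact: leqW.
rewrite -!natr1 !exprS; ring.
Qed.

End Chebyshev.

Section Trigonometry.
Import numFieldNormedType.Exports.
Variable R : realType.
Implicit Types (a b c D t : R) (k : nat).

Lemma sin_mulrn_pi k : sin ((pi : R) *+ k) = 0.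
Proof. by rewrite -[_ *+ k]add0r (alternatingn (@sinDpi R)) sin0 mulr0. Qed.

Lemma cos_mulrn_pi k : cos ((pi : R) *+ k) = (-1) ^+ k.
Proof. by rewrite -[_ *+ k]add0r (alternatingn (@cosDpi R)) cos0 mulr1. Qed.

Lemma sin_pihalfD_mulrn_pi k : sin ((pi : R) / 2 + pi *+ k) = (-1) ^+ k.
Proof. by rewrite (alternatingn (@sinDpi R)) sin_pihalf mulr1. Qed.

Lemma cos_pihalfD_mulrn_pi k : cos ((pi : R) / 2 + pi *+ k) = 0.
Proof. by rewrite (alternatingn (@cosDpi R)) cos_pihalf mulr0. Qed.

Lemma pi_frac_itv a D : 0 < a < D -> 0 < a * pi / D < pi.
Proof.
move=> /andP[a0 aD]; have D0 : 0 < D := lt_trans a0 aD.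
rewrite divr_gt0 ?mulr_gt0 ?pi_gt0 //= ltr_pdivrMr // mulrC ltr_pM2l //.
exact: pi_gt0.
Qed.

Lemma cos_pi_frac_lt a b D : 0 <= a -> a < b -> b <= D ->
  cos (b * pi / D) < cos (a * pi / D).
Proof.
move=> a0 ab bD; have D0 : 0 < D := lt_le_trans (le_lt_trans a0 ab) bD.
have frac_in c : 0 <= c <= D -> c * pi / D \in `[0, pi].
  move=> /andP[c0 cD]; rewrite in_itv /= divr_ge0 ?mulr_ge0 ?pi_ge0 ?(ltW D0) //=.
  by rewrite ler_pdivrMr // mulrC ler_pM2l // pi_gt0.
rewrite ltr_cos ?frac_in ?a0 ?bD ?(ltW (lt_le_trans ab bD)) ?(ltW (le_lt_trans a0 ab)) //.
by rewrite ltr_pM2r ?invr_gt0 // ltr_pM2r // pi_gt0.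
Qed.

Lemma cos_pi_frac_gtN1 a D : 0 <= a < D -> -1 < cos (a * pi / D).
Proof.
move=> /andP[a0 aD]; have := cos_pi_frac_lt a0 aD (lexx D).
by rewrite mulrAC divff ?mul1r ?cospi // gt_eqF // (le_lt_trans a0 aD).
Qed.

Lemma cos_pi_frac_lt1 a D : 0 < a <= D -> cos (a * pi / D) < 1.
Proof.
by move=> /andP[a0 aD]; have := cos_pi_frac_lt (lexx 0) a0 aD; rewrite !mul0r cos0.
Qed.

Lemma sin_le_id t : 0 <= t -> sin t <= t.
Proof.
rewrite le_eqVlt => /orP[/eqP <-|t0]; first by rewrite sin0.
have sin_derive x : x \in `]0, t[ -> is_derive x 1 (@sin R) (cos x).
  by move=> _; exact: is_derive_sin.
have sin_cont : {within `[0, t], continuous (@sin R)}%classic.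
  exact/continuous_subspaceT/continuous_sin.
have [c _] := MVT t0 sin_derive sin_cont; rewrite sin0 !subr0 => ->.
by have := cos_le1 c; nra.
Qed.

Lemma cos_ge1_sqr_half t : 0 <= t <= pi -> 1 - t ^+ 2 / 2 <= cos t.
Proof.
move=> /andP[t0 tpi].
have -> : cos t = 1 - 2 * sin (t / 2) ^+ 2.
  rewrite [in LHS](splitr t) cosD -expr2 cos2sin2; ring.
have : 0 <= sin (t / 2) by apply: sin_ge0_pi; apply/andP; split; lra.
have : sin (t / 2) <= t / 2 by apply: sin_le_id; lra.
nra.
Qed.

Lemma cos_pi_div_odd_gt n : (2 <= n)%N ->
  n%:R < (n%:R + 1) * cos ((pi : R) / (2 * n%:R + 1)).
Proof.
move=> n2; set N : R := n%:R; set d := (pi : R) / (2 * N + 1).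
have N2 : 2 <= N by rewrite /N (ler_nat R 2 n).
have pi4 : (pi : R) < 4 by have := @pihalf_lt2 R; lra.
have pi0 : (0 : R) < pi := pi_gt0 R.
have dD : d * (2 * N + 1) = pi by rewrite /d mulfVK //; lra.
have d0 : 0 < d by rewrite /d divr_gt0 //; lra.
have dpi : d <= pi by rewrite -dD ler_peMr; lra.
have cos_d : 1 - d ^+ 2 / 2 <= cos d by apply: cos_ge1_sqr_half; rewrite dpi ltW.
(* It remains to see (N + 1) d^2 < 2: as d (2N + 1) = pi < 4, this holds once
   16 (N + 1) <= 2 (2N + 1)^2, i.e. for N >= 2. *)
have : d ^+ 2 * (2 * N + 1) ^+ 2 < 16 by rewrite -exprMn dD; nra.
have : 16 * (N + 1) <= 2 * (2 * N + 1) ^+ 2 by nra.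
have : 0 < (2 * N + 1) ^+ 2 by rewrite exprn_gt0 //; lra.
nra.
Qed.

End Trigonometry.

Section MinimalZero.
Variable R : realType.
Implicit Types (p : {poly R}) (rs : seq R) (x : nat -> R).

Lemma is_min_zero_of_roots p rs g : p != 0 -> (size p <= (size rs).+1)%N ->
  uniq rs -> all (root p) rs -> g \in rs -> all (fun r => g <= r) rs ->
  is_min_zero p g.
Proof.
move=> p0 size_p urs rrs grs rs_ge; split; first exact: (allP rrs).
move=> y ry; apply: (allP rs_ge); apply/negPn/negP => yrs.
have := @max_poly_roots _ p (y :: rs) p0.
by rewrite /= ry rrs yrs urs /= ltnNge size_p => /(_ isT isT).
Qed.

Lemma is_min_zero_of_decreasing_roots p x n : (0 < n)%N -> p != 0 ->
  (size p <= n.+1)%N -> (forall k, (k < n)%N -> root p (x k)) ->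
  (forall i j, (i < j < n)%N -> x j < x i) ->
  is_min_zero p (x n.-1).
Proof.
move=> n0 p0 size_p rx xdec.
apply: (@is_min_zero_of_roots p [seq x k | k <- iota 0 n]) => //.
- by rewrite size_map size_iota.
- rewrite map_inj_in_uniq ?iota_uniq // => i j.
  rewrite !mem_iota !add0n => /andP[_ i_n] /andP[_ j_n] xij.
  by case: (ltngtP i j) => // [ij|ji]; [have := xdec i j | have := xdec j i];
    rewrite ?ij ?ji ?i_n ?j_n xij ltxx => /(_ isT).
- by apply/allP => z /mapP [k]; rewrite mem_iota add0n => /andP[_ k_n] ->; apply: rx.
- by apply: map_f; rewrite mem_iota add0n ltn_predL n0.
apply/allP => z /mapP [k]; rewrite mem_iota add0n => /andP[_ k_n] ->.
case: (ltngtP k n.-1) => [kn|nk|->]; last exact: lexx.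
  by rewrite ltW // xdec // kn ltn_predL.
by move: nk k_n; lia.
Qed.

Lemma mulr_lt0_sign_alt (a b : R) k :
  a * (-1) ^+ k.+1 < 0 -> b * (-1) ^+ k < 0 -> a * b < 0.
Proof.
move=> ha hb; have : 0 < (a * (-1) ^+ k.+1) * (b * (-1) ^+ k) by rewrite nmulr_rgt0.
have -> : (a * (-1) ^+ k.+1) * (b * (-1) ^+ k) = - (a * b) * ((-1) ^+ k) ^+ 2.
  by rewrite exprS; ring.
by rewrite sqrr_sign mulr1 oppr_gt0.
Qed.

Lemma roots_of_sign_changes p x m :
  (forall i j, (i < j <= m)%N -> x j < x i) ->
  (forall k, (k <= m)%N -> p.[x k] * (-1) ^+ k < 0) ->
  exists rs, [/\ size rs = m, uniq rs, all (root p) rs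
                & all (fun r => x m < r < x 0%N) rs].
Proof.
elim: m => [|m IH] xdec xsgn; first by exists [::].
have [||rs [size_rs urs rrs rs_in]] := IH.
- by move=> i j /andP[ij jm]; apply: xdec; rewrite ij leqW.
- by move=> k km; apply: xsgn; rewrite leqW.
have xm0 : x m <= x 0%N.
  by case: (posnP m) => [->|m0]; [exact: lexx | rewrite ltW ?xdec ?m0 ?leqW].
have xm1m : x m.+1 < x m by rewrite xdec ?leqnn.
have [r] := poly_ivtoo (ltW xm1m) (mulr_lt0_sign_alt (xsgn _ (leqnn _)) (xsgn m (leqnSn _))).
rewrite in_itv /= => /andP[xm1r rxm] rr.
exists (r :: rs); split => /=; first by rewrite size_rs.
- rewrite urs andbT; apply/negP => /(allP rs_in) /andP[+ _].
  by rewrite ltNge (ltW rxm).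
- by rewrite rr rrs.
rewrite xm1r (lt_le_trans rxm xm0) /=; apply/allP => y /(allP rs_in) /andP[xmy ->].
by rewrite (lt_trans xm1m xmy).
Qed.

Lemma is_min_zero_below_sign_changes p x m a :
  (size p <= m.+3)%N -> root p 1 -> x 0%N < 1 ->
  (forall i j, (i < j <= m)%N -> x j < x i) ->
  (forall k, (k <= m)%N -> p.[x k] * (-1) ^+ k < 0) ->
  a < x m -> p.[a] * (-1) ^+ m.+1 < 0 ->
  exists2 g, is_min_zero p g & a < g < x m.
Proof.
move=> size_p r1 x01 xdec xsgn axm asgn.
have [rs [size_rs urs rrs rs_in]] := roots_of_sign_changes xdec xsgn.
have xm0 : x m <= x 0%N.
  by case: (posnP m) => [->|m0]; [exact: lexx | rewrite ltW ?xdec ?m0 ?leqnn].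
have [g] := poly_ivtoo (ltW axm) (mulr_lt0_sign_alt asgn (xsgn m (leqnn m))).
rewrite in_itv /= => /andP[ag gxm] rg.
have g1 : g < 1 := lt_le_trans gxm (le_trans xm0 (ltW x01)).
have p0 : p != 0 by apply: contraTneq asgn => ->; rewrite horner0 mul0r ltxx.
exists g => //; last by rewrite ag gxm.
(* The m roots between the nodes, g and 1 already fill the degree bound. *)
apply: (@is_min_zero_of_roots p [:: g, 1 & rs]) => /=.
- exact: p0.
- by rewrite size_rs.
- rewrite urs andbT !inE negb_or (lt_eqF g1) /=; apply/andP; split.
    by apply/negP => /(allP rs_in) /andP[+ _]; rewrite ltNge (ltW gxm).
  by apply/negP => /(allP rs_in) /andP[_ +]; rewrite ltNge (ltW x01).
- by rewrite rg r1 rrs.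
- exact: mem_head.
rewrite lexx (ltW g1) /=; apply/allP => r /(allP rs_in) /andP[xmr _].
exact: ltW (lt_trans gxm xmr).
Qed.

Lemma poly_eq0_on_cos p : (forall t, 0 < t < pi -> p.[cos t] = 0) -> p = 0.
Proof.
move=> pcos; apply/eqP/negPn/negP => p0; pose N := size p.
have node_lt i j : (i < j <= N)%N ->
    cos (j%:R * pi / N.+1%:R) < cos (i%:R * pi / N.+1%:R) :> R.
  by move=> /andP[ij jN]; apply: cos_pi_frac_lt; rewrite ?ler0n ?ltr_nat ?ler_nat ?leqW.
pose rs : seq R := [seq cos (k.+1%:R * pi / N.+1%:R) | k <- iota 0 N].
suff [rs_root rs_uniq] : all (root p) rs /\ uniq rs.
  by have := max_poly_roots p0 rs_root rs_uniq; rewrite size_map size_iota ltnn.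
split.
  apply/allP => z /mapP [k]; rewrite mem_iota add0n => /andP[_ kN] ->.
  by apply/eqP/pcos/pi_frac_itv; rewrite ltr0Sn ltr_nat ltnS.
rewrite map_inj_in_uniq ?iota_uniq // => i j.
rewrite !mem_iota !add0n => /andP[_ iN] /andP[_ jN] cij.
by case: (ltngtP i j) => // [ij|ji]; [have := node_lt i.+1 j.+1 | have := node_lt j.+1 i.+1];
  rewrite ltnS ?ij ?ji ?iN ?jN cij ltxx => /(_ isT).
Qed.

End MinimalZero.

Section Spoly.
Variable R : realType.
Implicit Types (n k : nat) (a b t : R).

Lemma size_linear_poly a b : (size (a *: 'X + b%:P)%R <= 2)%N.
Proof.
rewrite (leq_trans (size_polyD _ _)) // geq_max (leq_trans (size_polyC_leq1 _)) //.
by rewrite (leq_trans (size_scale_leq _ _)) // size_polyX.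
Qed.

Lemma size_quadratic_poly a b : (size (a *: 'X ^+ 2 + b *: 'X - 1)%R <= 3)%N.
Proof.
rewrite (leq_trans (size_polyD _ _)) // geq_max size_polyN size_poly1 andbT.
rewrite (leq_trans (size_polyD _ _)) // geq_max.
rewrite (leq_trans (size_scale_leq _ _)) ?size_polyXn //=.
by rewrite (leq_trans (size_scale_leq _ _)) // size_polyX.
Qed.

Lemma Spoly_odd n : Spoly R (2 * n + 1) =
    2%:P * ((2 * n%:R + 2) *: 'X ^+ 2 + (2 * n%:R - 1) *: 'X - 1) * Ucheb R n
    - 2%:P * ((2 * n%:R + 3) *: 'X + (2 * n%:R + 1)%:P) * Ushift R n.
Proof.
have -> : (2 * n + 1 = true + n.*2)%N by rewrite addnC mul2n.
by rewrite /Spoly half_bit_double /= odd_double.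
Qed.

Lemma Spoly_even n : Spoly R (2 * n) =
    ((2 * n%:R + 1) *: 'X + (2 * n%:R - 1)%:P) * Ucheb R n
    - ((2 * n%:R + 3) *: 'X + (2 * n%:R + 1)%:P) * Ushift R n.
Proof. by rewrite /Spoly mul2n odd_double doubleK. Qed.

Lemma size_mul_leq (p q : {poly R}) i j :
  (size p <= i)%N -> (size q <= j)%N -> (size (p * q)%R <= (i + j).-1)%N.
Proof. by move=> pi qj; have := size_polyMleq p q; lia. Qed.

Lemma size_Spoly_odd n : (size (Spoly R (2 * n + 1)) <= n.+3)%N.
Proof.
rewrite Spoly_odd /Ucheb (leq_trans (size_polyD _ _)) // size_polyN geq_max -!mulrA.
apply/andP; split; apply: (leq_trans (size_mul_leq (j := n.+3) (size_polyC_leq1 _) _)) => //.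
  exact: (leq_trans (size_mul_leq (size_quadratic_poly _ _) (size_Ushift _ _))).
by apply: (leq_trans (size_mul_leq (size_linear_poly _ _) (size_Ushift _ _))); lia.
Qed.

Lemma size_Spoly_even n : (size (Spoly R (2 * n)) <= n.+2)%N.
Proof.
rewrite Spoly_even /Ucheb (leq_trans (size_polyD _ _)) // size_polyN geq_max.
apply/andP; split.
  exact: (leq_trans (size_mul_leq (size_linear_poly _ _) (size_Ushift _ _))).
by apply: (leq_trans (size_mul_leq (size_linear_poly _ _) (size_Ushift _ _))); lia.
Qed.

Lemma root_Spoly1 m : root (Spoly R m) 1.
Proof.
rewrite /root -[m]odd_double_half -mul2n; case: (odd m) => /=.
  rewrite addnC Spoly_odd /Ucheb -?polyC1.
  rewrite !(hornerD, hornerN, hornerM, hornerZ, hornerC, hornerX, horner_exp).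
  by rewrite !hornerUshift1 -natr1; apply/eqP; ring.
rewrite add0n Spoly_even /Ucheb -?polyC1.
rewrite !(hornerD, hornerN, hornerM, hornerZ, hornerC, hornerX, horner_exp).
by rewrite !hornerUshift1 -natr1; apply/eqP; ring.
Qed.

Lemma hornerSpoly_oddN1 n : (Spoly R (2 * n + 1)).[-1] = 4 * (-1) ^+ n.
Proof.
rewrite Spoly_odd /Ucheb -?polyC1.
rewrite !(hornerD, hornerN, hornerM, hornerZ, hornerC, hornerX, horner_exp).
by rewrite !hornerUshiftN1 !exprS -natr1; ring.
Qed.

Lemma hornerSpoly_odd_cos n t : (Spoly R (2 * n + 1)).[cos t] * sin t =
  2 * (- (1 + cos t) ^+ 2 * sin (n.+1%:R * t)
       + ((2 * n%:R + 3) * cos t + 2 * n%:R + 1) * cos (n.+1%:R * t) * sin t).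
Proof.
rewrite Spoly_odd /Ucheb -?polyC1.
rewrite !(hornerD, hornerN, hornerM, hornerZ, hornerC, hornerX, horner_exp).
set A := (2 * n%:R + 2) * cos t ^+ 2 + (2 * n%:R - 1) * cos t - 1.
set B := (2 * n%:R + 3) * cos t + (2 * n%:R + 1).
transitivity (2 * A * ((Ushift R n.+1).[cos t] * sin t)
              - 2 * B * ((Ushift R n).[cos t] * sin t)); first by ring.
rewrite !hornerUshift_cos.
have -> : n%:R * t = n.+1%:R * t - t by rewrite mulrSr mulrDl mul1r addrK.
rewrite sinB /A /B; ring.
Qed.

Lemma hornerSpoly_even_cos n t : (Spoly R (2 * n)).[cos t] * sin t =
  - 2 * (1 + cos t) * sin ((2 * n%:R + 1) * t / 2) * cos (t / 2)
  + 4 * (n%:R + (n%:R + 1) * cos t) * cos ((2 * n%:R + 1) * t / 2) * sin (t / 2).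
Proof.
rewrite Spoly_even /Ucheb -?polyC1.
rewrite !(hornerD, hornerN, hornerM, hornerZ, hornerC, hornerX, horner_exp).
set A := (2 * n%:R + 1) * cos t + (2 * n%:R - 1).
set B := (2 * n%:R + 3) * cos t + (2 * n%:R + 1).
transitivity (A * ((Ushift R n.+1).[cos t] * sin t)
              - B * ((Ushift R n).[cos t] * sin t)); first by ring.
rewrite !hornerUshift_cos.
have -> : n.+1%:R * t = (2 * n%:R + 1) * t / 2 + t / 2 by rewrite -natr1; field.
have -> : n%:R * t = (2 * n%:R + 1) * t / 2 - t / 2 by field.
rewrite sinB sinD /A /B; ring.
Qed.

Lemma Spoly_odd_sign_node n k : (k <= n)%N ->
  (Spoly R (2 * n + 1)).[cos ((2 * k%:R + 1) * pi / (2 * n%:R + 2))] * (-1) ^+ k < 0.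
Proof.
move=> kn; set t := (2 * k%:R + 1) * pi / (2 * n%:R + 2).
have k_n : (k%:R : R) <= n%:R by rewrite ler_nat.
have k0 : (0 : R) <= k%:R := ler0n _ k.
have /andP[t0 tpi] : 0 < t < pi by apply: pi_frac_itv; lra.
have cosN1 : -1 < cos t by apply: cos_pi_frac_gtN1; lra.
have sin_t : 0 < sin t by apply: sin_gt0_pi; rewrite t0 tpi.
have e := hornerSpoly_odd_cos n t.
have angle : n.+1%:R * t = pi / 2 + pi *+ k.
  by rewrite /t -mulr_natr -natr1; field; lra.
rewrite angle sin_pihalfD_mulrn_pi cos_pihalfD_mulrn_pi in e.
rewrite -(pmulr_llt0 _ sin_t) mulrAC e mulr0 mul0r addr0.
have -> : 2 * (- (1 + cos t) ^+ 2 * (-1) ^+ k) * (-1) ^+ k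
          = - 2 * (1 + cos t) ^+ 2 * ((-1) ^+ k) ^+ 2 by ring.
by rewrite sqrr_sign mulr1 mulNr oppr_lt0 mulr_gt0 // exprn_gt0 //; lra.
Qed.

Lemma Spoly_even_sign_node n k : (k < n)%N ->
  (Spoly R (2 * n)).[cos ((2 * k%:R + 1) * pi / (2 * n%:R + 1))] * (-1) ^+ k < 0.
Proof.
move=> kn; set t := (2 * k%:R + 1) * pi / (2 * n%:R + 1).
have k_n : (k%:R : R) + 1 <= n%:R by rewrite natr1 ler_nat.
have k0 : (0 : R) <= k%:R := ler0n _ k.
have /andP[t0 tpi] : 0 < t < pi by apply: pi_frac_itv; lra.
have cosN1 : -1 < cos t by apply: cos_pi_frac_gtN1; lra.
have cos_half : 0 < cos (t / 2) by apply: cos_gt0_pihalf; lra.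
have sin_t : 0 < sin t by apply: sin_gt0_pi; rewrite t0 tpi.
have e := hornerSpoly_even_cos n t.
have angle : (2 * n%:R + 1) * t / 2 = pi / 2 + pi *+ k.
  by rewrite /t -mulr_natr; field; lra.
rewrite angle sin_pihalfD_mulrn_pi cos_pihalfD_mulrn_pi in e.
rewrite -(pmulr_llt0 _ sin_t) mulrAC e mulr0 mul0r addr0.
have -> : - 2 * (1 + cos t) * (-1) ^+ k * cos (t / 2) * (-1) ^+ k
          = - 2 * (1 + cos t) * cos (t / 2) * ((-1) ^+ k) ^+ 2 by ring.
by rewrite sqrr_sign mulr1 -mulrA mulNr oppr_lt0 !mulr_gt0 //; lra.
Qed.

Lemma Spoly_even_sign_beta n : (2 <= n)%N ->
  (Spoly R (2 * n)).[cos (2 * n%:R * pi / (2 * n%:R + 1))] * (-1) ^+ n < 0.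
Proof.
move=> n2; set t := 2 * n%:R * pi / (2 * n%:R + 1).
have n_ge2 : 2 <= (n%:R : R) by rewrite (ler_nat R 2 n).
have /andP[t0 tpi] : 0 < t < pi by apply: pi_frac_itv; lra.
have sin_half : 0 < sin (t / 2) by apply: sin_gt0_pi; lra.
have sin_t : 0 < sin t by apply: sin_gt0_pi; rewrite t0 tpi.
have e := hornerSpoly_even_cos n t.
have angle : (2 * n%:R + 1) * t / 2 = pi *+ n.
  by rewrite /t -mulr_natr; field; lra.
have cos_t : cos t = - cos (pi / (2 * n%:R + 1)).
  have -> : t = pi - pi / (2 * n%:R + 1) by rewrite /t; field; lra.
  by rewrite cosB cospi sinpi mul0r addr0 mulN1r.
rewrite angle sin_mulrn_pi cos_mulrn_pi in e.
have := cos_pi_div_odd_gt R n2.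
rewrite -(pmulr_llt0 _ sin_t) mulrAC e mulr0 mul0r add0r cos_t.
set c := cos (pi / (2 * n%:R + 1)) => c_gt.
have -> : 4 * (n%:R + (n%:R + 1) * - c) * (-1) ^+ n * sin (t / 2) * (-1) ^+ n
          = 4 * (n%:R - (n%:R + 1) * c) * sin (t / 2) * ((-1) ^+ n) ^+ 2 by ring.
by rewrite sqrr_sign mulr1 pmulr_llt0 // pmulr_rlt0 //; lra.
Qed.

End Spoly.

Section PartialChebyshev.
Variable R : realType.
Implicit Types (n : nat) (P : {poly R}).

Lemma root_Ushift_cos k j : (0 < j < k)%N ->
  root (Ushift R k) (cos (j%:R * pi / k%:R)).
Proof.
move=> /andP[j0 jk]; set t := j%:R * pi / k%:R.
have /andP[t0 tpi] : 0 < t < pi by apply: pi_frac_itv; rewrite ltr0n j0 ltr_nat.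
have k0 : k%:R != 0 :> R by rewrite pnatr_eq0 -lt0n (ltn_trans j0 jk).
have sin_t : 0 < sin t by apply: sin_gt0_pi; rewrite t0 tpi.
have := hornerUshift_cos k t.
have -> : k%:R * t = pi *+ j by rewrite /t -mulr_natr; field.
by rewrite sin_mulrn_pi => /eqP; rewrite mulf_eq0 (gt_eqF sin_t) orbF.
Qed.

Lemma is_Ue_odd n P : is_Ue (2 * n + 1) P -> P = Ucheb R n.
Proof.
rewrite /is_Ue oddD oddM /= => PE; apply/eqP; rewrite -subr_eq0; apply/eqP.
apply: poly_eq0_on_cos => t /andP[t0 tpi].
have sin_t : 0 < sin t by apply: sin_gt0_pi; rewrite t0 tpi.
rewrite hornerD hornerN PE ?gt_eqF //.
have -> : ((2 * n + 1)%:R + 1) * t / 2 = n.+1%:R * t.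
  by rewrite natrD natrM -natr1; field.
rewrite -(hornerUshift_cos n.+1 t).
by rewrite /Ucheb mulfK ?gt_eqF // subrr.
Qed.

Lemma is_Ue_even n P : is_Ue (2 * n) P -> P = Ucheb R n + Ushift R n.
Proof.
rewrite /is_Ue oddM /= => PE; apply/eqP; rewrite -subr_eq0; apply/eqP.
apply: poly_eq0_on_cos => t /andP[t0 tpi].
have sin_t : 0 < sin t by apply: sin_gt0_pi; rewrite t0 tpi.
have sin_half : 0 < sin (t / 2) by apply: sin_gt0_pi; apply/andP; split; lra.
have sin_double : sin t = 2 * sin (t / 2) * cos (t / 2).
  by rewrite [in LHS](splitr t) sinD; ring.
rewrite hornerD hornerN PE ?gt_eqF // natrM; apply/eqP; rewrite subr_eq0; apply/eqP.
apply: (mulIf (lt0r_neq0 sin_t)) => /=; rewrite /Ucheb hornerD [in RHS]mulrDl !hornerUshift_cos.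
have -> : n.+1%:R * t = (2 * n%:R + 1) * t / 2 + t / 2 by rewrite -natr1; field.
have -> : n%:R * t = (2 * n%:R + 1) * t / 2 - t / 2 by field.
by rewrite sinD sinB sin_double; field; rewrite lt0r_neq0.
Qed.

Lemma is_Ue_odd_min_zero n P : (1 <= n)%N -> is_Ue (2 * n + 1) P ->
  is_min_zero P (cos (2 * n%:R * pi / (2 * n%:R + 2))).
Proof.
move=> n1 PE; rewrite (is_Ue_odd PE).
have -> : 2 * n%:R * pi / (2 * n%:R + 2) = n.-1.+1%:R * pi / n.+1%:R :> R.
  by rewrite prednK // -natr1; field; have := ler0n R n; lra.
apply: (is_min_zero_of_decreasing_roots (x := fun k => cos (k.+1%:R * pi / n.+1%:R))).
- exact: n1.
- apply/eqP => U0; have := hornerUshift1 R n.+1.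
  by rewrite -/(Ucheb R n) U0 horner0 => /eqP; rewrite eq_sym pnatr_eq0.
- exact: size_Ushift.
- by move=> k kn; apply: root_Ushift_cos.
move=> i j /andP[ij jn]; apply: cos_pi_frac_lt; rewrite ?ler0n ?ltr_nat ?ler_nat ?ltnS //.
exact: ltnW.
Qed.

Lemma is_Ue_even_min_zero n P : (1 <= n)%N -> is_Ue (2 * n) P ->
  is_min_zero P (cos (2 * n%:R * pi / (2 * n%:R + 1))).
Proof.
move=> n1 PUe; have PE := is_Ue_even PUe.
move: PUe; rewrite /is_Ue oddM /= => PUe.
have n0 : (0 : R) <= n%:R := ler0n R n.
rewrite -[in 2 * n%:R * _](prednK n1).
apply: (is_min_zero_of_decreasing_roots
          (x := fun k => cos (2 * k.+1%:R * pi / (2 * n%:R + 1)))).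
- exact: n1.
- apply/eqP => P0; have := congr1 (horner^~ 1) PE.
  by rewrite /= P0 /Ucheb hornerD !hornerUshift1 horner0 => /eqP; rewrite -natrD eq_sym pnatr_eq0.
- rewrite PE /Ucheb (leq_trans (size_polyD _ _)) // geq_max size_Ushift.
  exact: leq_trans (size_Ushift _ _) (leqnSn _).
- move=> k kn; set t := 2 * k.+1%:R * pi / (2 * n%:R + 1).
  have k_n : (k.+1%:R : R) <= n%:R by rewrite ler_nat.
  have k0 : (0 : R) < k.+1%:R := ltr0Sn R k.
  have /andP[t0 tpi] : 0 < t < pi by apply: pi_frac_itv; lra.
  have sin_half : 0 < sin (t / 2) by apply: sin_gt0_pi; apply/andP; split; lra.
  rewrite /root PUe; last exact: lt0r_neq0.
  have -> : ((2 * n)%:R + 1) * t / 2 = pi *+ k.+1.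
    by rewrite /t natrM -mulr_natr; field; apply: lt0r_neq0; lra.
  by rewrite sin_mulrn_pi mul0r.
move=> i j /andP[ij jn]; apply: cos_pi_frac_lt.
- by rewrite mulr_ge0 ?ler0n.
- by rewrite ltr_pM2l ?ltr_nat.
have : (j.+1%:R : R) <= n%:R by rewrite ler_nat.
lra.
Qed.

End PartialChebyshev.

Section SpolyMinimalZero.
Variable R : realType.

Lemma Spoly_odd_min_zero n : exists2 g : R, is_min_zero (Spoly R (2 * n + 1)) g &
  -1 < g < cos ((2 * n%:R + 1) * pi / (2 * n%:R + 2)).
Proof.
have n0 : (0 : R) <= n%:R := ler0n R n.
apply: (is_min_zero_below_sign_changes
          (x := fun k => cos ((2 * k%:R + 1) * pi / (2 * n%:R + 2)))).
- exact: size_Spoly_odd.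
- exact: root_Spoly1.
- by apply: cos_pi_frac_lt1; lra.
- move=> i j /andP[ij jn]; apply: cos_pi_frac_lt.
  + by have := ler0n R i; lra.
  + by rewrite ltrD2r ltr_pM2l // ltr_nat.
  + have : (j%:R : R) <= n%:R by rewrite ler_nat.
    lra.
- exact: Spoly_odd_sign_node.
- by apply: cos_pi_frac_gtN1; lra.
by rewrite hornerSpoly_oddN1 exprS mulrCA -mulrA -expr2 sqrr_sign; lra.
Qed.

Lemma Spoly_even_min_zero n : (2 <= n)%N ->
  exists2 g : R, is_min_zero (Spoly R (2 * n)) g &
  cos (2 * n%:R * pi / (2 * n%:R + 1)) < g < cos ((2 * n%:R - 1) * pi / (2 * n%:R + 1)).
Proof.
case: n => // m m1.
have m0 : (0 : R) <= m%:R := ler0n R m.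
have -> : 2 * m.+1%:R - 1 = 2 * m%:R + 1 :> R by rewrite -natr1; ring.
apply: (is_min_zero_below_sign_changes
          (x := fun k => cos ((2 * k%:R + 1) * pi / (2 * m.+1%:R + 1)))).
- exact: size_Spoly_even.
- exact: root_Spoly1.
- by apply: cos_pi_frac_lt1; rewrite -natr1; lra.
- move=> i j /andP[ij jm]; apply: cos_pi_frac_lt.
  + by have := ler0n R i; lra.
  + by rewrite ltrD2r ltr_pM2l // ltr_nat.
  + have : (j%:R : R) <= m%:R by rewrite ler_nat.
    rewrite -natr1; lra.
- by move=> k km; apply: Spoly_even_sign_node; rewrite ltnS.
- by apply: cos_pi_frac_lt; rewrite -?natr1; lra.
exact: Spoly_even_sign_beta.
Qed.

End SpolyMinimalZero.

Lemma is_Ue2_min_zero (R : realType) (P : {poly R}) : is_Ue 2 P -> is_min_zero P (- (1 / 2)).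
Proof.
move=> PUe; have PE : P = Ucheb R 1 + Ushift R 1 := is_Ue_even (n := 1) PUe.
have Pval x : P.[x] = 2 * x + 1.
  rewrite PE /Ucheb /= -?polyC1.
  by rewrite !(hornerD, hornerN, hornerM, hornerC, hornerX, horner0); ring.
split; first by rewrite /root Pval; apply/eqP; field.
by move=> y; rewrite /root Pval => /eqP; lra.
Qed.

Lemma Spoly2_min_zero (R : realType) : is_min_zero (Spoly R 2) (- (1 / 2)).
Proof.
have Sval x : (Spoly R 2).[x] = 3 * ((2 * x + 1) * (x - 1)).
  rewrite (Spoly_even R 1) /Ucheb /= -?polyC1.
  by rewrite !(hornerD, hornerN, hornerM, hornerC, hornerX, hornerZ, horner0); ring.
split; first by rewrite /root Sval; apply/eqP; field.
move=> y; rewrite /root Sval !mulf_eq0 pnatr_eq0 /= => /orP[] /eqP; lra.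
Qed.

Theorem mainTheorem17 (R : realType) (Ue : nat -> {poly R})
    (hUe : forall n : nat, is_Ue n (Ue n)) :
  [/\ is_min_zero (Ue 2) (- (1 / 2)),
      is_min_zero (Spoly R 2) (- (1 / 2)),
      (forall n : nat, (1 <= n)%N ->
         exists beta gamma : R,
           [/\ is_min_zero (Ue (2 * n + 1)%N) beta,
               is_min_zero (Spoly R (2 * n + 1)%N) gamma,
               -1 < gamma /\
               gamma < cos ((2 * n%:R + 1) * pi / (2 * n%:R + 2)),
               cos ((2 * n%:R + 1) * pi / (2 * n%:R + 2)) < beta &
               beta = cos (2 * n%:R * pi / (2 * n%:R + 2))]) &
      (forall n : nat, (2 <= n)%N ->
         exists beta gamma : R,
           [/\ is_min_zero (Ue (2 * n)%N) beta,
               is_min_zero (Spoly R (2 * n)%N) gamma,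
               -1 < beta /\
               beta = cos (2 * n%:R * pi / (2 * n%:R + 1)),
               beta < gamma &
               gamma < cos ((2 * n%:R - 1) * pi / (2 * n%:R + 1))])].
Proof.
split; [exact: is_Ue2_min_zero | exact: Spoly2_min_zero | move=> n n1 | move=> n n2].
  have [g g_min /andP[g_gt g_lt]] := Spoly_odd_min_zero R n.
  exists (cos (2 * n%:R * pi / (2 * n%:R + 2))), g; split => //.
  - exact: is_Ue_odd_min_zero.
  - by apply: cos_pi_frac_lt; have := ler0n R n; lra.
have [g g_min /andP[g_gt g_lt]] := Spoly_even_min_zero R n2.
exists (cos (2 * n%:R * pi / (2 * n%:R + 1))), g; split => //.
- by apply: is_Ue_even_min_zero => //; exact: ltnW.
- by split => //; apply: cos_pi_frac_gtN1; have := ler0n R n; lra.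
Qed.
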